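(* Consider the RHC closed-loop system described in the context. Assume that $A$ is Schur stable, i.e. all eigenvalues of $A$ have modulus strictly less than $1$. Assume also that $\mathbb{E}\bigl[\bar\varphi(\bar F\bar w)\bigr]=0$ for every initial condition. Then the closed loop satisfies $$\sup_{t\in\mathbb{N}_0}\mathbb{E}_{x_0}\bigl[\|x_t\|^2\bigr]<\infty.$$
   Context: **System.** Consider the discrete-time system $x_{t+1}=Ax_t+Bu_t+Fw_t+r$ for $t\in\mathbb{N}_0$. The data are: - $x_t\in\mathbb{R}^n$, $u_t\in\mathbb{R}^m$ and $w_t\in\mathbb{R}^n$; - known matrices $A$, $B$, $F$ and a known vector $r$; - a given initial state $x_0$; - i.i.d. noise vectors $w_t$, possibly with unbounded support, with mean $\mu_w$ and finite covariance $\Sigma_w$; - the input constraint $\|u_t\|_\infty\le U_{\max}$, where $U_{\max}>0$. **Stacked notation.** Fix a horizon $N\in\mathbb{N}$. Define - $\bar x=(x_0^\mathsf{T},\dots,x_N^\mathsf{T})^\mathsf{T}$, $\bar u=(u_0^\mathsf{T},\dots,u_{N-1}^\mathsf{T})^\mathsf{T}$, $\bar w=(w_0^\mathsf{T},\dots,w_{N-1}^\mathsf{T})^\mathsf{T}$, and $\bar r=(r^\mathsf{T},\dots,r^\mathsf{T})^\mathsf{T}\in\mathbb{R}^{Nn}$; - $\bar F=\operatorname{diag}(F,\dots,F)$ and $\bar A=(I,A^\mathsf{T},\dots,(A^N)^\mathsf{T})^\mathsf{T}$; - $\bar B$ is the block matrix with blocks $A^{k-1-j}B$ for $j<k$ and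 $0$ otherwise ($k=0,\dots,N$, $j=0,\dots,N-1$); - $\bar D$ is the block matrix with blocks $A^{k-1-j}$ for $j<k$ and $0$ otherwise. Then $\bar x=\bar Ax_0+\bar B\bar u+\bar D\bar F\bar w+\bar D\bar r$. Let $Q_0,\dots,Q_N$ and $R_0,\dots,R_{N-1}$ be symmetric positive definite, and set $\bar Q=\operatorname{diag}(Q_0,\dots,Q_N)$ and $\bar R=\operatorname{diag}(R_0,\dots,R_{N-1})$. **Saturated noise measurements.** Let $0<\phi_{\max}\le U_{\max}$, and let $\varphi_i^j:\mathbb{R}\to\mathbb{R}$ ($i=0,\dots,N-1$, $j=1,\dots,n$) be functions bounded in absolute value by $\phi_{\max}$. Set $\varphi_i(Fw_i)=(\varphi_i^1(F_1w_i),\dots,\varphi_i^n(F_nw_i))^\mathsf{T}$, with $F_j$ the $j$-th row of $F$, and $\bar\varphi(\bar F\bar w)=(\varphi_0(Fw_0)^\mathsf{T},\dots,\varphi_{N-1}(Fw_{N-1})^\mathsf{T})^\mathsf{T}$. **Finite-horizon problem.** For a given initial state $x$, the finite-horizon problem is to minimize $\mathbb{E}_{x}[\bar x^\mathsf{T}\bar Q\bar x+\bar u^\mathsf{T}\bar R\bar u]$, with $x_0=x$, over policies $\bar u=\bar G\bar\varphi(\bar F\bar w)+\bar d$. Here $\bar d\in\mathbb{R}^{Nm}$, and $\bar G\in\mathbb{R}^{Nm\times Nn}$ is strictly block lower triangular with $m\times n$ blocks $G_{t,i}$ ($i<t$). The constraint is $|\bar d_i|+\|\bar G_i\|_1\phi_{\max}\le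 U_{\max}$ for $i=1,\dots,Nm$, where $\bar G_i$ is the $i$-th row of $\bar G$. **RHC closed loop.** At each time $kN$ ($k\in\mathbb{N}_0$), the finite-horizon problem is solved with initial state $x_{kN}$, giving an optimal solution $(\bar G^*_{kN},\bar d^*_{kN})$ that depends on $x_{kN}$. The whole resulting input sequence is then applied over the next $N$ steps. That is, for $\ell=0,\dots,N-1$, $$(u_{kN}^\mathsf{T},\dots,u_{kN+N-1}^\mathsf{T})^\mathsf{T}=\bar G^*_{kN}\,\bar\varphi\bigl(\bar F\,(w_{kN}^\mathsf{T},\dots,w_{kN+N-1}^\mathsf{T})^\mathsf{T}\bigr)+\bar d^*_{kN},$$ and the state evolves by $x_{t+1}=Ax_t+Bu_t+Fw_t+r$. *)

From HB Require Import structures.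
From mathcomp Require Import all_boot all_order all_algebra.
From mathcomp Require Import all_classical all_reals all_analysis.
From mathcomp Require complex.
Import complex.ComplexField.
Set Implicit Arguments. Unset Strict Implicit. Unset Printing Implicit Defensive.
Import Order.TTheory GRing.Theory Num.Theory.
Local Open Scope classical_set_scope.
Local Open Scope ring_scope.

Notation Cplx R := (complex.complex R).
Notation realC R := (@complex.real_complex_def R (Phant R)).

Definition schur_stable (R : realType) (n : nat) (A : 'M[R]_n) : Prop :=
  forall z : Cplx R, eigenvalue (map_mx (realC R) A) z -> `|z| < 1.

Definition sym_posdef (R : realType) (k : nat) (M : 'M[R]_k) : Prop :=
  M^T = M /\ forall v : 'cV[R]_k, v != 0 -> 0 < (v^T *m M *m v) 0 0.

Section Closedloop.
Variables (R : realType) (n m N : nat).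
Variables (A : 'M[R]_n) (B : 'M[R]_(n, m)) (F : 'M[R]_n) (r : 'cV[R]_n).

Definition gainT := 'I_N -> 'I_N -> 'M[R]_(m, n).
Definition offT := 'I_N -> 'cV[R]_m.

(* phi : i -> j -> (R -> R) is phi_i^j;  phi_i(F w) = (phi_i^j(F_j w))_j *)
Definition phivec (phi : 'I_N -> 'I_n -> R -> R) (i : 'I_N) (w : 'cV[R]_n)
  : 'cV[R]_n := \col_j phi i j ((F *m w) j 0).

Definition pol_input (phi : 'I_N -> 'I_n -> R -> R) (G : gainT) (d : offT)
  (wb : nat -> 'cV[R]_n) (k : nat) : 'cV[R]_m :=
  if (insub k : option 'I_N) is Some t then
    \sum_(s < N | (s < t)%N) G t s *m phivec phi s (wb s) + d t
  else 0.

Fixpoint traj (x : 'cV[R]_n) (u : nat -> 'cV[R]_m) (wb : nat -> 'cV[R]_n)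
  (k : nat) : 'cV[R]_n :=
  match k with
  | 0 => x
  | k'.+1 => A *m traj x u wb k' + B *m u k' + F *m wb k' + r
  end.

Definition stage_cost (phi : 'I_N -> 'I_n -> R -> R)
  (Q : 'I_N.+1 -> 'M[R]_n) (Rw : 'I_N -> 'M[R]_m)
  (x : 'cV[R]_n) (G : gainT) (d : offT) (wb : nat -> 'cV[R]_n) : R :=
  let u := pol_input phi G d wb in
  \sum_(k < N.+1) ((traj x u wb k)^T *m Q k *m traj x u wb k) 0 0
  + \sum_(k < N) ((u k)^T *m Rw k *m u k) 0 0.

Definition admissible (phimax Umax : R) (G : gainT) (d : offT) : Prop :=
  (forall t s : 'I_N, (t <= s)%N -> G t s = 0) /\
  (forall (t : 'I_N) (a : 'I_m),
     `|d t a 0| + (\sum_(s < N) \sum_(j < n) `|G t s a j|) * phimax <= Umax).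

Section Prob.
Variables (dT : measure_display) (T : measurableType dT) (P : probability T R).
Variable (w : nat -> T -> 'cV[R]_n).

Definition noise_block (k : nat) (om : T) : nat -> 'cV[R]_n :=
  fun i => w (k * N + i) om.

Definition exp_cost phi Q Rw (x : 'cV[R]_n) (G : gainT) (d : offT) : \bar R :=
  \int[P]_om (stage_cost phi Q Rw x G d (noise_block 0 om))%:E.

Definition optimal phi Q Rw phimax Umax (x : 'cV[R]_n) (Gd : gainT * offT) :=
  admissible phimax Umax Gd.1 Gd.2 /\
  forall G d, admissible phimax Umax G d ->
    (exp_cost phi Q Rw x Gd.1 Gd.2 <= exp_cost phi Q Rw x G d)%E.

(* RHC closed loop: the state at the block start times kN *)
Fixpoint block_state phi (sol : 'cV[R]_n -> gainT * offT) (x0 : 'cV[R]_n)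
  (k : nat) (om : T) : 'cV[R]_n :=
  match k with
  | 0 => x0
  | k'.+1 =>
      let x := block_state phi sol x0 k' om in
      let wb := noise_block k' om in
      traj x (pol_input phi (sol x).1 (sol x).2 wb) wb N
  end.

Definition cl_state phi sol x0 (t : nat) (om : T) : 'cV[R]_n :=
  let k := (t %/ N)%N in
  let x := block_state phi sol x0 k om in
  let wb := noise_block k om in
  traj x (pol_input phi (sol x).1 (sol x).2 wb) wb (t %% N).
End Prob.
End Closedloop.

Definition vec_event (R : realType) (dT : measure_display) (T : measurableType dT)
  (n : nat) (X : T -> 'cV[R]_n) (Bs : 'I_n -> set R) : set T :=
  \big[setI/setT]_(j < n) ((fun om => X om j 0) @^-1` Bs j).

(* (w_t) i.i.d. random vectors in R^n (laws determined on measurable rectangles,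
   a pi-system generating the Borel sets of R^n) *)
Definition iid_vectors (R : realType) (dT : measure_display) (T : measurableType dT)
  (P : probability T R) (n : nat) (w : nat -> T -> 'cV[R]_n) : Prop :=
  (forall t (j : 'I_n), measurable_fun setT (fun om => w t om j 0)) /\
  (forall (S : seq nat) (Bs : nat -> 'I_n -> set R),
     uniq S -> (forall t j, measurable (Bs t j)) ->
     P (\big[setI/setT]_(t <- S) vec_event (w t) (Bs t))
     = (\prod_(t <- S) P (vec_event (w t) (Bs t)))%E) /\
  (forall t (Bs : 'I_n -> set R), (forall j, measurable (Bs j)) ->
     P (vec_event (w t) Bs) = P (vec_event (w 0%N) Bs)).

(* Schur stability makes the entrywise 1-norms of the powers A^k summable
   (peel the Cayley-Hamilton factors (A - z) off one eigenvalue at a time).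
   The admissibility constraint bounds every applied input by Umax, so writing
   x_t = A^t x_0 + sum_{s<t} A^(t-1-s) (B u_s + F w_s + r) gives
   |x_t| <= a + |F| sum_s |A^(t-1-s)| |w_s|.  Squaring with the weighted
   Cauchy-Schwarz inequality and taking expectations, the i.i.d. noise
   contributes sum_s |A^(t-1-s)| E|w_s|^2 <= S E|w_0|^2, a bound uniform in t. *)

From HB Require Import structures.
From mathcomp Require Import all_boot all_order all_algebra.
From mathcomp Require Import all_classical all_reals all_analysis.
From mathcomp Require Import measurable_realfun lra complex.
Set Implicit Arguments. Unset Strict Implicit. Unset Printing Implicit Defensive.
Import Order.TTheory GRing.Theory Num.Theory.
Local Open Scope classical_set_scope.
Local Open Scope ring_scope.

Section MxNorm1.
Variable C : numDomainType.

Definition mxnorm1 p q (M : 'M[C]_(p, q)) : C := \sum_i \sum_j `|M i j|.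

Lemma mxnorm1_ge0 p q (M : 'M[C]_(p, q)) : 0 <= mxnorm1 M.
Proof. by apply: sumr_ge0 => i _; apply: sumr_ge0. Qed.

Lemma mxnorm10 p q : mxnorm1 (0 : 'M[C]_(p, q)) = 0.
Proof. by rewrite /mxnorm1 big1 // => i _; rewrite big1 // => j _; rewrite mxE normr0. Qed.

Lemma mxnorm1D p q (M M' : 'M[C]_(p, q)) :
  mxnorm1 (M + M') <= mxnorm1 M + mxnorm1 M'.
Proof.
rewrite /mxnorm1 -big_split /=; apply: ler_sum => i _.
rewrite -big_split /=; apply: ler_sum => j _; rewrite mxE; exact: ler_normD.
Qed.

Lemma mxnorm1Z p q (a : C) (M : 'M[C]_(p, q)) : mxnorm1 (a *: M) = `|a| * mxnorm1 M.
Proof.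
rewrite /mxnorm1 mulr_sumr; apply: eq_bigr => i _; rewrite mulr_sumr.
by apply: eq_bigr => j _; rewrite mxE normrM.
Qed.

Lemma mxnorm1_sum p q K (M : 'I_K -> 'M[C]_(p, q)) :
  mxnorm1 (\sum_s M s) <= \sum_s mxnorm1 (M s).
Proof.
elim/big_ind2: _ => [|M1 a1 M2 a2 h1 h2|//]; first by rewrite mxnorm10.
by apply: le_trans (mxnorm1D _ _) _; exact: lerD.
Qed.

Lemma mxnorm1M p q k (M : 'M[C]_(p, q)) (N : 'M[C]_(q, k)) :
  mxnorm1 (M *m N) <= mxnorm1 M * mxnorm1 N.
Proof.
rewrite /mxnorm1 mulr_suml; apply: ler_sum => i _.
apply: (le_trans (y := (\sum_j \sum_l `|M i l| * `|N l j|))).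
  apply: ler_sum => j _; rewrite mxE; apply: le_trans (ler_norm_sum _ _ _) _.
  by apply: ler_sum => l _; rewrite normrM.
rewrite exchange_big mulr_suml /=; apply: ler_sum => l _.
rewrite -mulr_sumr ler_wpM2l // (bigD1 l) //= lerDl.
by apply: sumr_ge0 => l' _; apply: sumr_ge0.
Qed.

Lemma mxnorm1_col p (v : 'cV[C]_p) : mxnorm1 v = \sum_j `|v j 0|.
Proof. by apply: eq_bigr => j _; rewrite big_ord1. Qed.

End MxNorm1.

Lemma norm1_rec_bounded (C : numFieldType) p q (a b : nat -> 'M[C]_(p, q)) (z Sb : C) :
  `|z| < 1 -> (forall k, a k.+1 = z *: a k + b k) ->
  (forall K, \sum_(k < K) mxnorm1 (b k) <= Sb) ->
  forall K, \sum_(k < K) mxnorm1 (a k) <= (mxnorm1 (a 0%N) + Sb) / (1 - `|z|).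
Proof.
move=> z_lt1 aS bSb K; set s := \sum_(k < K) mxnorm1 (a k).
have s_rec : s <= mxnorm1 (a 0%N) + `|z| * s + Sb.
  apply: (le_trans (y := (\sum_(k < K.+1) mxnorm1 (a k)))).
    by rewrite big_ord_recr /= lerDl mxnorm1_ge0.
  rewrite big_ord_recl /= -addrA lerD2l mulr_sumr.
  apply: (le_trans (y := (\sum_(k < K) (`|z| * mxnorm1 (a k) + mxnorm1 (b k))))).
    by apply: ler_sum => k _; rewrite /bump /= add1n aS -mxnorm1Z; exact: mxnorm1D.
  by rewrite big_split /= lerD2l bSb.
by rewrite ler_pdivlMr ?subr_gt0 // mulrBr mulr1 lerBlDr mulrC addrAC.
Qed.

Lemma horner_prod_summable (C : numFieldType) k (A : 'M[C]_k.+1) (s : seq C) :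
  all (fun z => `|z| < 1) s ->
  forall M : 'M[C]_k.+1, horner_mx A (\prod_(z <- s) ('X - z%:P)) *m M = 0 ->
  exists S, forall K, \sum_(i < K) mxnorm1 (A ^+ i *m M) <= S.
Proof.
elim: s => [_ M|z s IH /andP[z_lt1 s_lt1] M].
  rewrite big_nil rmorph1 mul1mx => ->.
  by exists 0 => K; rewrite big1 // => i _; rewrite mulmx0 mxnorm10.
rewrite big_cons mulrC rmorphM /= => hM.
pose M' := (A - z%:M) *m M.
have [Sb hSb] : exists Sb, forall K, \sum_(i < K) mxnorm1 (A ^+ i *m M') <= Sb.
  apply: IH => //; rewrite /M' mulmxA mulmxE.
  by move: hM; rewrite rmorphB /= horner_mx_X horner_mx_C mulmxE.
exists ((mxnorm1 (A ^+ 0 *m M) + Sb) / (1 - `|z|)).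
apply: (@norm1_rec_bounded _ _ _ (fun i => A ^+ i *m M) (fun i => A ^+ i *m M') z Sb z_lt1) => // i.
rewrite /M' exprSr -mulmxE -mulmxA mulmxBl mulmxBr.
by rewrite mul_scalar_mx -scalemxAr addrC subrK.
Qed.

Lemma normc_real (R : realType) (x : R) : `|realC R x| = realC R `|x|.
Proof. by rewrite complex.normc_def /= expr0n /= addr0 sqrtr_sqr. Qed.

Lemma schur_stable_summable (R : realType) n (A : 'M[R]_n) : schur_stable A ->
  exists S : R, forall K, \sum_(k < K) mxnorm1 (A ^+ k) <= S.
Proof.
case: n A => [|n] A hA.
  by exists 0 => K; rewrite big1 // => k _; rewrite /mxnorm1 big_ord0.
pose Ac := map_mx (realC R) A.
have [s char_Ac] := closed_field_poly_normal (char_poly Ac).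
rewrite (monicP (char_poly_monic Ac)) scale1r in char_Ac.
have s_lt1 : all (fun z => `|z| < 1) s.
  by apply/allP => z zs; apply: hA; rewrite eigenvalue_root_char char_Ac root_prod_XsubC.
have [S hS] : exists S, forall K, \sum_(k < K) mxnorm1 (Ac ^+ k *m 1%:M) <= S.
  by apply: horner_prod_summable s_lt1 _ _; rewrite -char_Ac Cayley_Hamilton mul0mx.
exists (complex.Re S) => K; have := hS K.
have -> : \sum_(k < K) mxnorm1 (Ac ^+ k *m 1%:M) = realC R (\sum_(k < K) mxnorm1 (A ^+ k)).
  rewrite rmorph_sum; apply: eq_bigr => k _.
  rewrite mulmx1 /Ac -rmorphXn /mxnorm1 rmorph_sum; apply: eq_bigr => i _.
  by rewrite rmorph_sum; apply: eq_bigr => j _; rewrite mxE normc_real.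
by rewrite complex.lecE /= => /andP[].
Qed.

Section SquareSums.
Variable R : realFieldType.

Lemma sqr_wsum_le K (c y : 'I_K -> R) : (forall i, 0 <= c i) ->
  (\sum_i c i * y i) ^+ 2 <= (\sum_i c i) * \sum_i c i * y i ^+ 2.
Proof.
move=> c0.
have sqrE : (\sum_i c i * y i) ^+ 2 = \sum_i \sum_j c i * c j * (y i * y j).
  rewrite expr2 mulr_suml; apply: eq_bigr => i _; rewrite mulr_sumr.
  by apply: eq_bigr => j _; rewrite mulrACA.
have rhsE : (\sum_i c i) * (\sum_i c i * y i ^+ 2) = \sum_i \sum_j c i * c j * y j ^+ 2.
  rewrite mulr_suml; apply: eq_bigr => i _; rewrite mulr_sumr.
  by apply: eq_bigr => j _; rewrite mulrA.
have rhsE' : (\sum_i c i) * (\sum_i c i * y i ^+ 2) = \sum_i \sum_j c i * c j * y i ^+ 2.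
  rewrite rhsE exchange_big /=; apply: eq_bigr => i _; apply: eq_bigr => j _.
  by rewrite [c j * _]mulrC.
(* Write both sides as double sums and use 2 y_i y_j <= y_i^2 + y_j^2 termwise. *)
rewrite -(ler_pM2l (_ : 0 < 2)) // !mulr_natl !mulr2n {1}rhsE rhsE' sqrE -!big_split.
apply: ler_sum => i _; rewrite -!big_split; apply: ler_sum => j _ /=.
rewrite -!mulrDr ler_wpM2l ?mulr_ge0 //; have := sqr_ge0 (y i - y j); nra.
Qed.

Lemma sqr_sum_le_card K (y : 'I_K -> R) : (\sum_i y i) ^+ 2 <= K%:R * \sum_i y i ^+ 2.
Proof.
have := @sqr_wsum_le K (fun _ => 1) y (fun _ => ler01).
rewrite sumr_const card_ord; under eq_bigr do rewrite mul1r.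
by move=> /le_trans-> //; under eq_bigr do rewrite mul1r.
Qed.

Lemma sum_sqr_le_sqr_sum K (y : 'I_K -> R) : (forall i, 0 <= y i) ->
  \sum_i y i ^+ 2 <= (\sum_i y i) ^+ 2.
Proof.
move=> y0; rewrite [leRHS]expr2 mulr_suml; apply: ler_sum => i _.
by rewrite expr2 ler_wpM2l // (bigD1 i) //= lerDl sumr_ge0.
Qed.

Lemma sqrD_le (u v : R) : (u + v) ^+ 2 <= 2 * u ^+ 2 + 2 * v ^+ 2.
Proof. have := sqr_ge0 (u - v); rewrite !expr2; nra. Qed.

Lemma sum_sqr_le_norm1 p (v : 'cV[R]_p) : \sum_j v j 0 ^+ 2 <= mxnorm1 v ^+ 2.
Proof.
rewrite mxnorm1_col.
apply: le_trans (sum_sqr_le_sqr_sum _) => [|j]; last exact: normr_ge0.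
by rewrite (eq_bigr (fun j => `|v j 0| ^+ 2)) // => j _; rewrite real_normK ?num_real.
Qed.

Lemma sqr_norm1_le p (v : 'cV[R]_p) : mxnorm1 v ^+ 2 <= p%:R * \sum_j v j 0 ^+ 2.
Proof.
rewrite mxnorm1_col; apply: le_trans (sqr_sum_le_card _) _.
by rewrite (eq_bigr (fun j => v j 0 ^+ 2)) // => j _; rewrite real_normK ?num_real.
Qed.

End SquareSums.

Section PartialSums.
Variables (R : numDomainType) (c : nat -> R) (S : R).
Hypotheses (c_ge0 : forall k, 0 <= c k) (c_sums : forall K, \sum_(k < K) c k <= S).

Lemma bounded_sums_term t : c t <= S.
Proof. by apply: le_trans (c_sums t.+1); rewrite big_ord_recr /= lerDr sumr_ge0. Qed.

Lemma bounded_sums_rev t : \sum_(s < t) c (t - s.+1) <= S.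
Proof.
rewrite (reindex_inj rev_ord_inj) /= (eq_bigr (fun s : 'I_t => c s)) ?c_sums // => s _.
by rewrite subnSK // subKn // ltnW.
Qed.

End PartialSums.

Lemma lin_rec_closed_form (C : pzRingType) n (A : 'M[C]_n) (x v : nat -> 'cV[C]_n) :
  (forall t, x t.+1 = A *m x t + v t) ->
  forall t, x t = A ^+ t *m x 0%N + \sum_(s < t) A ^+ (t - s.+1) *m v s.
Proof.
move=> xS; elim=> [|t IH]; first by rewrite expr0 mul1mx big_ord0 addr0.
rewrite xS IH big_ord_recr /= subnn expr0 mul1mx mulmxDr addrA mulmxA mulmxE -exprS.
congr (_ + _ + _); rewrite mulmx_sumr; apply: eq_bigr => s _.
by rewrite mulmxA mulmxE -exprS subSS subnSK.
Qed.

Section BoundedInput.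
Variables (R : realFieldType) (n m : nat).
Variables (A : 'M[R]_n) (B : 'M[R]_(n, m)) (F : 'M[R]_n) (r : 'cV[R]_n).
Variables (x : nat -> 'cV[R]_n) (u : nat -> 'cV[R]_m) (v : nat -> 'cV[R]_n).
Variables (Umax S : R).
Hypothesis Umax_ge0 : 0 <= Umax.
Hypothesis xS : forall t, x t.+1 = A *m x t + B *m u t + F *m v t + r.
Hypothesis u_le : forall t a, `|u t a 0| <= Umax.
Hypothesis A_sums : forall K, \sum_(k < K) mxnorm1 (A ^+ k) <= S.

Let a0 := mxnorm1 B * (m%:R * Umax) + mxnorm1 r.
Let c k := mxnorm1 (A ^+ k).

Lemma bounded_input_norm1_le t :
  mxnorm1 (x t) <= S * (mxnorm1 (x 0%N) + a0) +
                   mxnorm1 F * \sum_(s < t) c (t - s.+1) * mxnorm1 (v s).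
Proof.
have c_ge0 k : 0 <= c k by exact: mxnorm1_ge0.
have a0_ge0 : 0 <= a0 by rewrite addr_ge0 ?mulr_ge0 ?mxnorm1_ge0.
have u_norm1 s : mxnorm1 (u s) <= m%:R * Umax.
  by rewrite mxnorm1_col mulr_natl -[m in _ *+ m]card_ord -sumr_const ler_sum.
have forcing_le s : mxnorm1 (B *m u s + F *m v s + r) <= a0 + mxnorm1 F * mxnorm1 (v s).
  apply: le_trans (mxnorm1D _ _) _; apply: le_trans (lerD (mxnorm1D _ _) (lexx _)) _.
  rewrite /a0 addrAC; apply: lerD; last exact: mxnorm1M.
  by rewrite lerD2r; apply: le_trans (mxnorm1M _ _) _; rewrite ler_wpM2l ?mxnorm1_ge0.
rewrite (@lin_rec_closed_form _ _ A x (fun s => B *m u s + F *m v s + r)); last first.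
  by move=> s; rewrite xS !addrA.
apply: le_trans (mxnorm1D _ _) _; apply: le_trans (lerD (mxnorm1M _ _) (mxnorm1_sum _)) _.
apply: (le_trans (y := c t * mxnorm1 (x 0%N) +
                       \sum_(s < t) c (t - s.+1) * (a0 + mxnorm1 F * mxnorm1 (v s)))).
  rewrite lerD2l; apply: ler_sum => s _; apply: le_trans (mxnorm1M _ _) _.
  by rewrite ler_wpM2l ?mxnorm1_ge0 ?forcing_le.
rewrite mulrDr -addrA lerD ?ler_wpM2r ?mxnorm1_ge0 ?(bounded_sums_term c_ge0 A_sums) //.
under eq_bigr do rewrite mulrDr; rewrite big_split lerD //.
  by rewrite -mulr_suml ler_wpM2r // (bounded_sums_rev A_sums).
by rewrite mulr_sumr; apply: ler_sum => s _; rewrite mulrCA.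
Qed.

Lemma bounded_input_sumsq_le t :
  \sum_j x t j 0 ^+ 2 <= 2 * (S * (mxnorm1 (x 0%N) + a0)) ^+ 2 +
    2 * mxnorm1 F ^+ 2 * S * n%:R * \sum_(s < t) c (t - s.+1) * \sum_j v s j 0 ^+ 2.
Proof.
have c_ge0 k : 0 <= c k by exact: mxnorm1_ge0.
have S_ge0 : 0 <= S by apply: le_trans (A_sums 0); rewrite big_ord0.
set a := S * _; pose Y := \sum_(s < t) c (t - s.+1) * mxnorm1 (v s).
have Y_sqr : Y ^+ 2 <= S * \sum_(s < t) c (t - s.+1) * mxnorm1 (v s) ^+ 2.
  apply: le_trans (@sqr_wsum_le R t (fun s => c (t - s.+1)) (fun s => mxnorm1 (v s))
    (fun s => c_ge0 _)) _.
  by rewrite ler_wpM2r ?(bounded_sums_rev A_sums) // sumr_ge0 // => s _; rewrite mulr_ge0 ?sqr_ge0.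
apply: le_trans (sum_sqr_le_norm1 _) _.
apply: (le_trans (y := (a + mxnorm1 F * Y) ^+ 2)).
  rewrite ler_sqr ?nnegrE ?mxnorm1_ge0 ?bounded_input_norm1_le //.
  by apply: le_trans (bounded_input_norm1_le t); exact: mxnorm1_ge0.
apply: le_trans (sqrD_le _ _) _; rewrite lerD2l exprMn -!mulrA !ler_wpM2l ?sqr_ge0 ?mxnorm1_ge0 //.
apply: le_trans Y_sqr _; rewrite ler_wpM2l // mulr_sumr ler_sum // => s _.
by rewrite [leRHS]mulrCA ler_wpM2l ?c_ge0 ?sqr_norm1_le.
Qed.

End BoundedInput.

Lemma pol_input_le (R : realType) n m N (F : 'M[R]_n) phi (G : gainT R n m N) d
    (phimax Umax : R) wb k (a : 'I_m) :
  0 <= Umax -> 0 <= phimax -> (forall i j s, `|phi i j s| <= phimax) ->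
  admissible phimax Umax G d -> `|pol_input F phi G d wb k a 0| <= Umax.
Proof.
move=> Umax_ge0 phimax_ge0 phi_le [_ Gd_le]; rewrite /pol_input.
case: insubP => [t _ _|_]; last by rewrite mxE normr0.
apply: le_trans (Gd_le t a); rewrite mxE summxE addrC.
apply: le_trans (ler_normD _ _) _; rewrite lerD2l mulr_suml.
apply: le_trans (ler_norm_sum _ _ _) _.
apply: (le_trans (y := \sum_(s < N) `|(G t s *m phivec F phi s (wb s)) a 0|)).
  by rewrite [leRHS](bigID (fun s : 'I_N => (s < t)%N)) /= lerDl sumr_ge0.
apply: ler_sum => s _; rewrite mxE mulr_suml.
apply: le_trans (ler_norm_sum _ _ _) _; apply: ler_sum => j _.
by rewrite normrM ler_wpM2l // mxE.
Qed.

Section ClosedLoop.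
Variables (R : realType) (n m N : nat) (N_gt0 : (0 < N)%N).
Variables (A : 'M[R]_n) (B : 'M[R]_(n, m)) (F : 'M[R]_n) (r : 'cV[R]_n).
Variables (dT : measure_display) (T : measurableType dT).
Variables (w : nat -> T -> 'cV[R]_n) (phi : 'I_N -> 'I_n -> R -> R).
Variables (sol : 'cV[R]_n -> gainT R n m N * offT R m N) (x0 : 'cV[R]_n).

Definition cl_input (t : nat) (om : T) : 'cV[R]_m :=
  let x := block_state A B F r w phi sol x0 (t %/ N) om in
  pol_input F phi (sol x).1 (sol x).2 (noise_block N w (t %/ N) om) (t %% N).

Lemma cl_state0 om : cl_state A B F r w phi sol x0 0 om = x0.
Proof. by rewrite /cl_state div0n mod0n. Qed.

Lemma cl_stateS t om :
  cl_state A B F r w phi sol x0 t.+1 om =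
  A *m cl_state A B F r w phi sol x0 t om + B *m cl_input t om + F *m w t om + r.
Proof.
rewrite /cl_state /cl_input; have t_eq := divn_eq t N.
set k := (t %/ N)%N in t_eq *; set l := (t %% N)%N in t_eq *.
have l_lt : (l < N)%N by rewrite ltn_mod.
have wl : noise_block N w k om l = w t om by rewrite /noise_block t_eq.
have [lS_lt|lS_ge] := ltnP l.+1 N.
  have tS : t.+1 = (k * N + l.+1)%N by rewrite t_eq addnS.
  rewrite tS divnMDl // divn_small // addn0 modnMDl modn_small //.
  by rewrite /= wl.
have lS : l.+1 = N by apply/eqP; rewrite eqn_leq l_lt lS_ge.
have tS : t.+1 = (k.+1 * N)%N by rewrite t_eq -addnS lS mulSn addnC.
by rewrite tS mulnK // modnMl /= -[X in traj _ _ _ _ _ _ _ X = _]lS /= wl.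
Qed.

End ClosedLoop.

Section Integrals.
Variables (d : measure_display) (T : measurableType d) (R : realType).

(* Nothing makes the closed-loop state measurable ([sol] is an arbitrary
   function), so monotonicity is read off the definition of the integral of a
   nonnegative function as a supremum over simple functions below it. *)
Lemma ge0_le_integral_nonmeasurable (mu : {measure set T -> \bar R}) (f g : T -> \bar R) :
  (forall x, 0 <= f x)%E -> (forall x, f x <= g x)%E ->
  (\int[mu]_x f x <= \int[mu]_x g x)%E.
Proof.
move=> f_ge0 fg; have g_ge0 x : (0 <= g x)%E by exact: le_trans (f_ge0 x) (fg x).
rewrite !ge0_integralE //; apply: ereal_sup_le => _ [h hf <-].
exists h => //= x; apply: le_trans (hf x) _; rewrite /patch /=; case: ifP => //.
Qed.

Variable P : probability T R.

Lemma integral_affine_ge0 K (c : 'I_K -> R) (h : 'I_K -> T -> R) (H : 'I_K -> R) (a b : R) :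
  0 <= a -> 0 <= b -> (forall s, 0 <= c s) -> (forall s om, 0 <= h s om) ->
  (forall s, measurable_fun setT (h s)) ->
  (forall s, \int[P]_om (h s om)%:E = (H s)%:E)%E ->
  (\int[P]_om (a + b * \sum_s c s * h s om)%:E = (a + b * \sum_s c s * H s)%:E)%E.
Proof.
move=> a_ge0 b_ge0 c_ge0 h_ge0 h_meas hH.
have ch_meas s : measurable_fun setT (fun om => c s * h s om).
  by apply: measurable_funM => //; exact: measurable_cst.
have ch_ge0 s om : 0 <= c s * h s om by rewrite mulr_ge0.
under eq_integral do rewrite EFinD.
rewrite ge0_integralD //; last 2 first.
- by move=> om _; rewrite lee_fin mulr_ge0 ?sumr_ge0.
- by apply/measurable_EFinP/measurable_funM; [exact: measurable_cst|exact: measurable_sum].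
rewrite integral_cst // [X in (_ * X + _)%E]probability_setT mule1.
under eq_integral do rewrite EFinM.
rewrite ge0_integralZl_EFin //; last 2 first.
- by move=> om _; rewrite lee_fin sumr_ge0.
- exact/measurable_EFinP/measurable_sum.
under eq_integral do rewrite -sumEFin.
rewrite ge0_integral_sum //; last 2 first.
- by move=> s; exact/measurable_EFinP.
- by move=> s om _; rewrite lee_fin.
rewrite EFinD EFinM -sumEFin; congr (_ + _ * _)%E; apply: eq_bigr => s _.
under eq_integral do rewrite EFinM.
by rewrite ge0_integralZl_EFin ?hH //; [move=> om _; rewrite lee_fin|exact/measurable_EFinP].
Qed.

Lemma same_law_sqr_integral (X Y : T -> R) :
  measurable_fun setT X -> measurable_fun setT Y ->
  (forall B : set R, measurable B -> P (X @^-1` B) = P (Y @^-1` B)) ->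
  (\int[P]_om (X om ^+ 2)%:E = \int[P]_om (Y om ^+ 2)%:E)%E.
Proof.
move=> X_meas Y_meas XY_law.
have sqr_meas : measurable_fun [set: R] (EFin \o (fun y : R => y ^+ 2)).
  by apply/measurable_EFinP; exact: exprn_measurable.
have sqr_ge0 : {in setT, forall y : R, (0 <= (y ^+ 2)%:E)%E}.
  by move=> y _; rewrite lee_fin sqr_ge0.
have := ge0_integral_pushforward X_meas P measurableT sqr_meas sqr_ge0.
have := ge0_integral_pushforward Y_meas P measurableT sqr_meas sqr_ge0.
rewrite !preimage_setT => <- <-; apply: eq_measure_integral => B mB _.
exact: XY_law.
Qed.

End Integrals.

Lemma vec_event_coord (R : realType) (d : measure_display) (T : measurableType d) n
    (X : T -> 'cV[R]_n) (j : 'I_n) (B : set R) :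
  vec_event X (fun i => if i == j then B else setT) = (fun om => X om j 0) @^-1` B.
Proof.
rewrite /vec_event (bigD1 j) //= eqxx big1 ?setIT // => i /negbTE ->.
by rewrite preimage_setT.
Qed.

Section IidNoise.
Variables (R : realType) (d : measure_display) (T : measurableType d).
Variables (P : probability T R) (n : nat) (w : nat -> T -> 'cV[R]_n).
Hypothesis w_iid : iid_vectors P w.

Lemma iid_sqr_integral t (j : 'I_n) :
  (\int[P]_om (w t om j 0 ^+ 2)%:E = \int[P]_om (w 0%N om j 0 ^+ 2)%:E)%E.
Proof.
have [w_meas [_ w_law]] := w_iid.
apply: same_law_sqr_integral => // B mB; rewrite -!vec_event_coord.
by apply: w_law => i; case: ifP.
Qed.

Hypothesis w0_sqr_int :
  forall j : 'I_n, P.-integrable setT (fun om => (w 0%N om j 0 ^+ 2)%:E).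

Definition noise_sqr_moment : R := \sum_j fine (\int[P]_om (w 0%N om j 0 ^+ 2)%:E).

Lemma noise_sqr_moment_ge0 : 0 <= noise_sqr_moment.
Proof.
by apply: sumr_ge0 => j _; rewrite fine_ge0 // integral_ge0 // => om _; rewrite lee_fin sqr_ge0.
Qed.

Lemma sumsq_noise_integral t :
  (\int[P]_om (\sum_j w t om j 0 ^+ 2)%:E = noise_sqr_moment%:E)%E.
Proof.
have sqr_meas j : measurable_fun setT (fun om => w t om j 0 ^+ 2).
  by apply: measurable_funX; exact: w_iid.1.
under eq_integral do rewrite -sumEFin.
rewrite ge0_integral_sum //; last 2 first.
- by move=> j; exact/measurable_EFinP.
- by move=> j om _; rewrite lee_fin sqr_ge0.
rewrite -sumEFin; apply: eq_bigr => j _.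
by rewrite iid_sqr_integral fineK //; exact: integrable_fin_num (w0_sqr_int j).
Qed.

Lemma noise_dominated_integral_le (X : T -> R) (c : nat -> R) (a b S : R) t :
  0 <= a -> 0 <= b -> (forall k, 0 <= c k) -> (forall K, \sum_(k < K) c k <= S) ->
  (forall om, 0 <= X om) ->
  (forall om, X om <= a + b * \sum_(s < t) c (t - s.+1)%N * \sum_j w s om j 0 ^+ 2) ->
  (\int[P]_om (X om)%:E <= (a + b * (S * noise_sqr_moment))%:E)%E.
Proof.
move=> a_ge0 b_ge0 c_ge0 c_sums X_ge0 X_le.
pose h (s : 'I_t) om := \sum_j w s om j 0 ^+ 2.
apply: le_trans (ge0_le_integral_nonmeasurable P
  (g := fun om => (a + b * \sum_(s < t) c (t - s.+1)%N * h s om)%:E) _ _) _.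
- by move=> om; rewrite lee_fin.
- by move=> om; rewrite lee_fin X_le.
rewrite (integral_affine_ge0 (H := fun=> noise_sqr_moment)) //.
- rewrite lee_fin lerD2l ler_wpM2l // -mulr_suml.
  by rewrite ler_wpM2r ?noise_sqr_moment_ge0 ?(bounded_sums_rev c_sums).
- by move=> s om; rewrite sumr_ge0 // => j _; rewrite sqr_ge0.
- by move=> s; apply: measurable_sum => j; apply: measurable_funX; exact: w_iid.1.
- by move=> s; exact: sumsq_noise_integral.
Qed.

End IidNoise.

Unset Implicit Arguments.

Theorem proposition4
  (R : realType) (n m N : nat) (hN : (0 < N)%N)
  (A : 'M[R]_n) (B : 'M[R]_(n, m)) (F : 'M[R]_n) (r : 'cV[R]_n) (x0 : 'cV[R]_n)
  (dT : measure_display) (T : measurableType dT) (P : probability T R)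
  (w : nat -> T -> 'cV[R]_n) (mu_w : 'cV[R]_n) (Sigma_w : 'M[R]_n)
  (Umax phimax : R) (phi : 'I_N -> 'I_n -> R -> R)
  (Q : 'I_N.+1 -> 'M[R]_n) (Rw : 'I_N -> 'M[R]_m)
  (sol : 'cV[R]_n -> gainT R n m N * offT R m N) :
  iid_vectors P w ->
  (forall t (j : 'I_n), P.-integrable setT (fun om => (w t om j 0)%:E)) ->
  (forall t (j : 'I_n), P.-integrable setT (fun om => ((w t om j 0) ^+ 2)%:E)) ->
  (forall j : 'I_n, \int[P]_om (w 0%N om j 0)%:E = (mu_w j 0)%:E)%E ->
  (forall j k : 'I_n,
     \int[P]_om ((w 0%N om j 0 - mu_w j 0) * (w 0%N om k 0 - mu_w k 0))%:E
     = (Sigma_w j k)%:E)%E ->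
  0 < Umax -> 0 < phimax -> phimax <= Umax ->
  (forall i j, measurable_fun setT (phi i j)) ->
  (forall i j (s : R), `|phi i j s| <= phimax) ->
  (forall k, sym_posdef (Q k)) -> (forall k, sym_posdef (Rw k)) ->
  (forall x, optimal A B F r P w phi Q Rw phimax Umax x (sol x)) ->
  schur_stable A ->
  (forall (i : 'I_N) (j : 'I_n), (\int[P]_om (phi i j ((F *m w i om) j 0))%:E = 0)%E) ->
  (ereal_sup (range (fun t : nat =>
      \int[P]_om (\sum_(j < n) (cl_state A B F r w phi sol x0 t om j 0) ^+ 2)%:E))
   < +oo)%E.
Proof.
move=> w_iid _ w_sqr_int _ _ Umax_gt0 phimax_gt0 _ _ phi_le _ _ sol_opt A_schur _.
have [S A_sums] := schur_stable_summable A_schur.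
have S_ge0 : 0 <= S by apply: le_trans (A_sums 0%N); rewrite big_ord0.
have u_le t om a : `|cl_input A B F r w phi sol x0 t om a 0| <= Umax.
  exact: pol_input_le (ltW Umax_gt0) (ltW phimax_gt0) phi_le (sol_opt _).1.
set a := 2 * (S * (mxnorm1 x0 + (mxnorm1 B * (m%:R * Umax) + mxnorm1 r))) ^+ 2.
set b := 2 * mxnorm1 F ^+ 2 * S * n%:R.
apply: (@le_lt_trans _ _ (a + b * (S * noise_sqr_moment P w))%:E); last exact: ltey.
apply: ge_ereal_sup => _ [t _ <-].
apply: (@noise_dominated_integral_le _ _ _ P n w w_iid (w_sqr_int 0%N) _
  (fun k => mxnorm1 (A ^+ k)) _ _ S t _ _ _ A_sums).
- by rewrite mulr_ge0 ?sqr_ge0.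
- by rewrite !mulr_ge0 ?sqr_ge0 ?mxnorm1_ge0.
- by move=> k; exact: mxnorm1_ge0.
- by move=> om; rewrite sumr_ge0 // => j _; rewrite sqr_ge0.
move=> om; have := bounded_input_sumsq_le (ltW Umax_gt0)
  (cl_stateS hN A B F r w phi sol x0 ^~ om) (u_le ^~ om) A_sums t.
by rewrite cl_state0.
Qed.
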